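(* For all positive integers $m$ and all $r = 0,1,\ldots,m-1$, the number of rows of $H(r,m)$ is $$g(r,m) = \sum_{i=0}^{r} \binom{m-r-1+i}{i} 2^i.$$
   Context: All matrices are binary. The matrices $G(r,m)$, $0\le r\le m$, are defined recursively by $G(m,m) = I_{2^m}$, $G(0,m) = (11\cdots1)$ (length $2^m$), and for $0<r<m$, $G(r,m) = \begin{pmatrix} G(r,m-1) & G(r,m-1) \\ \mathbf{0} & G(r-1,m-1)\end{pmatrix}$ (so $G(m-1,m)$ has $2^m-1$ rows). The matrices $H(r,m)$ are defined by: for all $m \ge 0$, $H(0,m) = (11\cdots1)$ (length $2^m$), $H(m-1,m) = G(m-1,m)$, $H(m,m) = I_{2^m}$; and for all positive integers $m$ and $r = 1,\ldots,m-2$, $$H(r,m) = \begin{pmatrix} H(r,m-1) & H(r,m-1) \\ \mathbf{0} & H(r-1,m-1) \\ H(r-1,m-1) & \mathbf{0}\end{pmatrix}.$$ *)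

(* Binary matrices are represented as lists of rows,
   each row a list of booleans; the number of rows is the list size. *)
From mathcomp Require Import all_boot.
Set Implicit Arguments. Unset Strict Implicit. Unset Printing Implicit Defensive.

Definition bmatrix := seq (seq bool).

Definition idm (n : nat) : bmatrix :=
  [seq [seq i == j | j <- iota 0 n] | i <- iota 0 n].

Definition onesm (n : nat) : bmatrix := [:: nseq n true].

Definition blockAA_0B (w : nat) (A B : bmatrix) : bmatrix :=
  [seq x ++ x | x <- A] ++ [seq nseq w false ++ y | y <- B].

(* G(r,m); only meaningful for r <= m *)
Fixpoint G (r m : nat) : bmatrix :=
  match m with
  | 0 => idm 1
  | m'.+1 =>
      if r == 0 then onesm (2 ^ m)
      else if m <= r then idm (2 ^ m)
      else blockAA_0B (2 ^ m') (G r m') (G r.-1 m')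
  end.

(* H(r,m); only meaningful for r <= m *)
Fixpoint H (r m : nat) : bmatrix :=
  match m with
  | 0 => onesm 1
  | m'.+1 =>
      if r == 0 then onesm (2 ^ m)
      else if r == m' then G r m
      else if m <= r then idm (2 ^ m)
      else blockAA_0B (2 ^ m') (H r m') (H r.-1 m')
             ++ [seq y ++ nseq (2 ^ m') false | y <- H r.-1 m']
  end.

Example ex1 : size (H 1 3) = 5. Proof. by []. Qed.
Example ex2 : size (H 2 5) = \sum_(i < 3) 'C(5 - 2 - 1 + i, i) * 2 ^ i. Proof. by rewrite !big_ord_recr big_ord0. Qed.

(* Splitting [H(r,m+1)] into its three row blocks gives the recursion
   [g(r,m+1) = g(r,m) + 2 g(r-1,m)], which the binomial sums also satisfy by
   Pascal's rule.  The recursion bottoms out at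
   [r = 0] (one row) and at [r = m-1], where [H = G] has [2^m - 1] rows. *)
From mathcomp Require Import all_boot.
From mathcomp Require Import zify.

(* The paper's [g(r,m)] is [gsum (m - r - 1) r]. *)
Definition gsum (k r : nat) := \sum_(i < r.+1) 'C(k + i, i) * 2 ^ i.

Lemma gsum0r k : gsum k 0 = 1.
Proof. by rewrite /gsum big_ord1 addn0 bin0. Qed.

Lemma sum_expn2 n : (\sum_(i < n) 2 ^ i).+1 = 2 ^ n.
Proof.
elim: n => [|n IHn]; first by rewrite big_ord0.
by rewrite big_ord_recr /= -addSn IHn expnS mul2n addnn.
Qed.

Lemma gsum0 r : (gsum 0 r).+1 = 2 ^ r.+1.
Proof. by rewrite -sum_expn2; congr _.+1; apply: eq_bigr => i _; rewrite binn mul1n. Qed.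

Lemma gsumSS k r : gsum k.+1 r.+1 = gsum k r.+1 + 2 * gsum k.+1 r.
Proof.
rewrite /gsum big_ord_recl [in X in _ = X + _]big_ord_recl !bin0 big_distrr -addnA.
congr (_ + _); rewrite -big_split; apply: eq_bigr => i _ /=.
rewrite /bump add1n addSn binS mulnDl addnS -addSn expnS.
by congr (_ + _); rewrite mulnCA.
Qed.

Lemma size_idm n : size (idm n) = n.
Proof. by rewrite size_map size_iota. Qed.

Lemma size_blockAA_0B w A B : size (blockAA_0B w A B) = size A + size B.
Proof. by rewrite size_cat !size_map. Qed.

Lemma G_diag m : G m m = idm (2 ^ m).
Proof. by case: m => //= m; rewrite leqnn. Qed.

Lemma G_recE r m : r <= m -> G r.+1 m.+2 = blockAA_0B (2 ^ m.+1) (G r.+1 m.+1) (G r m.+1).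
Proof. by move=> le_rm; rewrite [LHS]/= ifF // ltnS leq_gtF. Qed.

Lemma H_recE r m : r < m ->
  H r.+1 m.+2 = blockAA_0B (2 ^ m.+1) (H r.+1 m.+1) (H r m.+1)
                ++ [seq y ++ nseq (2 ^ m.+1) false | y <- H r m.+1].
Proof.
move=> lt_rm; rewrite [LHS]/= ifF; last by rewrite eqSS ltn_eqF.
by rewrite ifF // ltnS leq_gtF // ltnW.
Qed.

Lemma H_subdiag r : H r.+1 r.+2 = G r.+1 r.+2.
Proof. by rewrite [LHS]/= eqxx. Qed.

Lemma size_G_sub1 m : (size (G m m.+1)).+1 = 2 ^ m.+1.
Proof.
elim: m => [//|m IHm].
rewrite G_recE // size_blockAA_0B G_diag size_idm -addnS IHm.
by rewrite addnn -mul2n -expnS.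
Qed.

Lemma size_H k r : size (H r (r + k).+1) = gsum k r.
Proof.
elim: r k => [|r IHr] k; first by rewrite gsum0r; case: k.
elim: k => [|k IHk].
  by apply: succn_inj; rewrite gsum0 addn0 H_subdiag size_G_sub1.
rewrite addSn addnS H_recE ?ltnS ?leq_addr // size_cat size_blockAA_0B size_map.
by rewrite -addSn IHk addSnnS IHr gsumSS -addnA addnn mul2n.
Qed.

Theorem lemma13 (m r : nat) :
  0 < m -> r < m ->
  size (H r m) = \sum_(i < r.+1) 'C(m - r - 1 + i, i) * 2 ^ i.
Proof.
move=> _ lt_rm; rewrite -/(gsum (m - r - 1) r) -size_H.
congr (size (H r _)); lia.
Qed.
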